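(* Let $G\in\mathcal{G}_3$ be simply connected and suppose every interior edge of $G$ has even degree. Then $G$ can be properly vertex colored with $4$ colors.
   Context: All graphs are finite simple graphs $G=(V,E)$. For a vertex $x$, $S(x)$ is the subgraph induced by the neighbors of $x$. A graph is contractible if it is $K_1$, or, inductively, if there is a vertex $x$ with both $S(x)$ and the subgraph induced by $V\setminus\{x\}$ contractible. $\mathcal{G}_0$: graphs without edges; $\mathcal{S}_0$: those with two vertices; $\mathcal{B}_0$: those with one vertex. For $d\ge1$: $\mathcal{G}_d$ is the class of graphs in which every $S(x)$ lies in $\mathcal{S}_{d-1}\cup\mathcal{B}_{d-1}$; the boundary is the subgraph induced by vertices with $S(x)\in\mathcal{B}_{d-1}$, and the interior must be nonempty; $\mathcal{B}_d$: contractible graphs in $\mathcal{G}_d$ with boundary in $\mathcal{S}_{d-1}$; $\mathcal{S}_d$: non-contractible graphs in $\mathcal{G}_d$ such that removing any single vertex yields a graph in $\mathcal{B}_d$. For $G\in\mathcal{G}_3$ and an edge $e=(a,b)$, the degree of $e$ is the number of vertices of $S(a)\cap S(b)$ (the number of tetrahedra containing $e$); $e$ is interior if $S(a)\cap S(b)$ is a cycle graph. A closed path is a sequence $x_0,x_1,\dots,x_n=x_0$ of vertices with consecutive ones adjacent; two closed paths are homotopic if one can be transformed into the other by finitely many steps of the following types and their inverses: replacing a backtrack $a,b,a$ by $a$ (or $a,a$ by $a$), and replacing $a,b,c$ by $a,c$ when $(a,b,c)$ is a triangle. $G$ is simply connected if it is connected and every closed path is homotopic to a constant path. *)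

(* A finite simple graph is a finType T with a symmetric,
   irreflexive relation e. All graphs in the recursive definitions are induced
   subgraphs of (T, e) and are represented by their vertex sets U : {set T}. *)
From mathcomp Require Import all_boot.
From Stdlib Require Import Relations.
Set Implicit Arguments. Unset Strict Implicit. Unset Printing Implicit Defensive.

Section Graphs.
Variables (T : finType) (e : rel T).

Definition nbr (U : {set T}) (x : T) : {set T} := [set y in U | e x y].

Inductive contractible (U : {set T}) : Prop :=
| contr_K1 : #|U| = 1 -> contractible U
| contr_step (x : T) : x \in U -> contractible (nbr U x) ->
    contractible (U :\ x) -> contractible U.

Definition noedge (U : {set T}) : Prop :=
  forall x y, x \in U -> y \in U -> ~~ e x y.

Definition Gstep (SB : ({set T} -> Prop) * ({set T} -> Prop)) (U : {set T}) : Prop :=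
  (forall x, x \in U -> SB.1 (nbr U x) \/ SB.2 (nbr U x)) /\
  (exists x, x \in U /\ SB.1 (nbr U x)).

Definition is_boundary (Bp : {set T} -> Prop) (U W : {set T}) : Prop :=
  forall x, x \in W <-> (x \in U /\ Bp (nbr U x)).

(* SB d = (S_d, B_d) *)
Fixpoint SB (d : nat) : ({set T} -> Prop) * ({set T} -> Prop) :=
  match d with
  | 0 => (fun U => noedge U /\ #|U| = 2, fun U => noedge U /\ #|U| = 1)
  | d'.+1 =>
      let p := SB d' in
      let Bd := fun U => contractible U /\ Gstep p U /\
                 exists W, is_boundary p.2 U W /\ p.1 W in
      (fun U => Gstep p U /\ ~ contractible U /\
                 (forall x, x \in U -> Bd (U :\ x)), Bd)
  end.

Definition Gclass (d : nat) (U : {set T}) : Prop :=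
  match d with
  | 0 => noedge U
  | d'.+1 => Gstep (SB d') U
  end.

Definition is_cycle_graph (W : {set T}) : Prop :=
  2 < #|W| /\ (forall x, x \in W -> #|nbr W x| = 2) /\
  (forall x y, x \in W -> y \in W ->
     connect [rel a b | e a b && (a \in W) && (b \in W)] x y).

Definition edge_link (a b : T) : {set T} := nbr setT a :&: nbr setT b.
Definition edge_degree (a b : T) : nat := #|edge_link a b|.
Definition interior_edge (a b : T) : Prop := is_cycle_graph (edge_link a b).

(* closed paths and homotopy; consecutive vertices are adjacent (or equal,
   matching the rule "a,a -> a") *)
Definition closed_path (p : seq T) : Prop :=
  match p with
  | [::] => False
  | x :: q => path (fun a b => (a == b) || e a b) x q /\ last x q = x
  end.

Definition triangle (a b c : T) : Prop := e a b /\ e b c /\ e a c.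

Definition elem_step (p q : seq T) : Prop :=
  exists (s1 s2 : seq T) (a b c : T),
    (p = s1 ++ [:: a; b; a] ++ s2 /\ q = s1 ++ [:: a] ++ s2) \/
    (p = s1 ++ [:: a; a] ++ s2 /\ q = s1 ++ [:: a] ++ s2) \/
    (p = s1 ++ [:: a; b; c] ++ s2 /\ q = s1 ++ [:: a; c] ++ s2 /\ triangle a b c).

Definition hstep (p q : seq T) : Prop :=
  closed_path p /\ closed_path q /\ elem_step p q.

Definition homotopic : relation (seq T) := clos_refl_sym_trans (seq T) hstep.

Definition graph_connected : Prop := forall x y : T, connect e x y.

Definition simply_connected : Prop :=
  graph_connected /\
  forall x q, closed_path (x :: q) -> homotopic (x :: q) [:: x].

End Graphs.

(* Colorings are built by monodromy. Each unit sphere S(w) of a graph in G_3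
   lies in S_2 or B_2, and the links of its vertices are paths or cycles; the
   cycles are links of interior edges, so they are even and hence
   2-colorable. Therefore S(w) is 3-colorable, and its 3-colorings are rigid:
   along the connected links the third color is forced, so a 3-coloring is
   determined by its values on one edge. Hence a proper 4-coloring of a unit
   ball B(v) extends to the ball of each neighbour, uniquely on the overlap
   and consistently around triangles. Transporting a coloring of one ball
   along paths is therefore invariant under the elementary homotopies, and
   simple connectivity makes it path independent, which yields a global
   coloring. The same argument one dimension lower produces the 3-colorings
   of the spheres S(w), which are simply connected because adding a vertex
   with connected nonempty link to a simply connected graph keeps it simply
   connected. *)

From Stdlib Require Import Relations ClassicalEpsilon.
From mathcomp Require Import all_boot.
Set Implicit Arguments. Unset Strict Implicit. Unset Printing Implicit Defensive.

Section InducedSubgraphs.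
Variables (T : finType) (e : rel T).
Hypotheses (e_sym : symmetric e) (e_irr : irreflexive e).
Implicit Types (U V W : {set T}) (x y z u v w a b : T).

Definition induced (U : {set T}) := [rel a b | e a b && (a \in U) && (b \in U)].
Definition connected_in (U : {set T}) :=
  forall x y, x \in U -> y \in U -> connect (induced U) x y.

Lemma nbrP U x y : (y \in nbr e U x) = (y \in U) && e x y.
Proof. by rewrite inE. Qed.

Lemma edge_neq x y : e x y -> y != x.
Proof. by apply: contraTneq => ->; rewrite e_irr. Qed.

Lemma contractible_nonempty U : contractible e U -> exists x, x \in U.
Proof.
case=> [/eqP/cards1P [x ->]|x Hx _ _]; [exists x; exact: set11 | by exists x].
Qed.

Lemma induced_sym U : symmetric (induced U).
Proof. by move=> a b /=; rewrite (e_sym a b); case: (e b a); case: (a \in U); case: (b \in U). Qed.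

Lemma connect_induced_sub (V U : {set T}) : V \subset U ->
  forall x y, connect (induced V) x y -> connect (induced U) x y.
Proof.
move=> /subsetP sVU x y; apply: connect_sub => a b /= /andP[/andP[eab aV] bV].
by apply: connect1; rewrite /= eab !sVU.
Qed.

Lemma connected_in_setD1 U x u : x \in U -> connected_in (U :\ x) ->
  u \in nbr e U x -> connected_in U.
Proof.
move=> xU cU uN.
have /andP[uU exu] : (u \in U) && e x u by rewrite -nbrP.
have ux := edge_neq exu.
have uUx : u \in U :\ x by rewrite !inE ux.
have sub : U :\ x \subset U by apply: subsetDl.
have Hx : forall y, y \in U -> connect (induced U) x y.
  move=> y yU; case: (eqVneq y x) => [->|yx]; first exact: connect0.
  apply: (connect_trans (y:=u)); first by apply: connect1; rewrite /= exu xU uU.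
  by apply: connect_induced_sub sub _ _ (cU u y uUx _); rewrite !inE yx.
move=> a b aU bU.
case: (eqVneq a x) => [->|ax]; first exact: Hx.
case: (eqVneq b x) => [->|bx].
  by rewrite (sym_connect_sym (induced_sym U)); exact: Hx.
by apply: connect_induced_sub sub _ _ (cU a b _ _); rewrite !inE ?ax ?bx.
Qed.

Lemma contractible_connected U : contractible e U -> connected_in U.
Proof.
elim=> {U} [U /eqP/cards1P [z ->] a b|U x xU cN _ _ IH].
  by rewrite !inE => /eqP-> /eqP->; exact: connect0.
case: (contractible_nonempty cN) => u uN; exact: connected_in_setD1 xU IH uN.
Qed.

Definition Sd d := (SB e d).1.
Definition Bd d := (SB e d).2.

Lemma Bd_succ d U : Bd d.+1 U -> contractible e U /\ Gstep e (SB e d) U.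
Proof. by case=> [? [? _]]. Qed.

Lemma Sd_succ d U : Sd d.+1 U ->
  [/\ Gstep e (SB e d) U, ~ contractible e U & forall x, x \in U -> Bd d.+1 (U :\ x)].
Proof. by case=> [? [? ?]]. Qed.

Lemma SB_nonempty d U : Sd d U \/ Bd d U -> exists x, x \in U.
Proof.
case: d => [|d].
  have H : 0 < #|U| -> exists x, x \in U by move=> /card_gt0P.
  by case=> [[_ E]|[_ E]]; apply: H; rewrite E.
case=> [/Sd_succ [[_ [x [xU _]]] _ _]|/Bd_succ [/contractible_nonempty //]]; by exists x.
Qed.

Lemma SB_connected d U : Sd d.+1 U \/ Bd d.+1 U -> connected_in U.
Proof.
case=> [/Sd_succ [G _ HB]|/Bd_succ [/contractible_connected //]].
case: G => Hl [x [xU _]].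
have [u uN] := SB_nonempty (Hl x xU).
apply: (connected_in_setD1 xU _ uN).
by have /Bd_succ [/contractible_connected] := HB x xU.
Qed.

Lemma SB_succ_Gstep d U : Sd d.+1 U \/ Bd d.+1 U -> Gstep e (SB e d) U.
Proof. by case=> [/Sd_succ [] | /Bd_succ []]. Qed.

Lemma SB_link_nonempty d U w : Sd d.+1 U \/ Bd d.+1 U -> w \in U ->
  exists y, y \in nbr e U w.
Proof. by move=> /SB_succ_Gstep [G _] /G; apply: SB_nonempty. Qed.

Lemma SB_link_connected d U w : Sd d.+2 U \/ Bd d.+2 U -> w \in U ->
  connected_in (nbr e U w).
Proof. by move=> /SB_succ_Gstep [G _] /G; apply: SB_connected. Qed.

Lemma connect_induced_ind W y (Q : T -> Prop) : Q y ->
  (forall a b, a \in W -> b \in W -> e a b -> Q a -> Q b) ->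
  forall z, connect (induced W) y z -> Q z.
Proof.
move=> Qy H z /connectP [p Hp ->]; elim: p y Qy Hp => //= b p IH a Qa.
by case/andP=> /andP[/andP[eab aW] bW] Hp; apply: IH (H a b aW bW eab Qa) Hp.
Qed.

Lemma connected_in_setT : graph_connected e -> connected_in [set: T].
Proof.
move=> Hc x y _ _; apply: connect_sub (Hc x y) => a b eab.
by apply: connect1; rewrite /= eab !in_setT.
Qed.

End InducedSubgraphs.

Section TwoColorings.
Variables (T : finType) (e : rel T).
Hypotheses (e_sym : symmetric e) (e_irr : irreflexive e).
Implicit Types (U W A B : {set T}) (x y z u v w : T) (P : {set 'I_4}) (g c d : T -> 'I_4).

Definition proper_on (P : {set 'I_4}) U (c : T -> 'I_4) :=
  (forall x, x \in U -> c x \in P) /\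
  (forall x y, x \in U -> y \in U -> e x y -> c x != c y).

Lemma proper_agree P U c d : (forall x, x \in U -> c x = d x) ->
  proper_on P U c -> proper_on P U d.
Proof.
move=> E [H1 H2]; split=> [x xU|x y xU yU]; first by rewrite -E ?H1.
by rewrite -!E //; apply: H2.
Qed.

Lemma proper_on_setU1 P A x k g : k \in P -> proper_on P A g ->
  (forall y, y \in A -> e x y -> g y != k) ->
  proper_on P (x |: A) (fun z => if z == x then k else g z).
Proof.
move=> kP [H1 H2] Hk; split=> [z|z y].
  by rewrite !inE; case: (eqVneq z x) => // _ /= /H1.
rewrite !inE; case: (eqVneq z x) => [->|zx]; case: (eqVneq y x) => [->|yx] //=.
- by rewrite e_irr.
- by move=> _ yA exy; rewrite eq_sym; apply: Hk.
- by move=> zA _ ezx; apply: Hk => //; rewrite e_sym.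
- exact: H2.
Qed.

Lemma noedge_sub A B : A \subset B -> noedge e B -> noedge e A.
Proof. by move=> /subsetP s nB x y /s xB /s yB; apply: nB. Qed.

Lemma contractible_noedge_card1 A : contractible e A -> noedge e A -> #|A| = 1.
Proof.
case=> [//|x xA cN _] nA; exfalso.
have [y] := contractible_nonempty cN; rewrite nbrP => /andP[yA exy].
by move: (nA x y xA yA); rewrite exy.
Qed.

Definition other (a b k : 'I_4) := if k == a then b else a.

Lemma other_in a b k : other a b k \in [set a; b].
Proof. by rewrite /other !inE; case: (k == a); rewrite eqxx ?orbT. Qed.

Lemma other_neq a b k : a != b -> k \in [set a; b] -> other a b k != k.
Proof.
move=> ab; rewrite /other !inE => /orP[/eqP->|/eqP->]; first by rewrite eqxx eq_sym.
by rewrite [b == a]eq_sym (negbTE ab).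
Qed.

Lemma tree_2colorable U (a b : 'I_4) : a != b -> contractible e U ->
  (forall y, y \in U -> noedge e (nbr e U y)) ->
  exists g, proper_on [set a; b] U g.
Proof.
move=> ab cU; elim: cU => {U} [U /eqP/cards1P [z ->] _|U x xU cN _ _ IH nU].
  exists (fun _ => a); split=> [x _|x y]; first by rewrite !inE eqxx.
  by rewrite !inE => /eqP-> /eqP->; rewrite e_irr.
have [g Hg] : exists g, proper_on [set a; b] (U :\ x) g.
  apply: IH => y; rewrite inE => /andP[_ yU]; apply: noedge_sub (nU y yU).
  by apply/subsetP=> z; rewrite !inE => /andP[/andP[_ ->] ->].
have /eqP/cards1P [u Nu] := contractible_noedge_card1 cN (nU x xU).
have uU : u \in U :\ x.
  have : u \in nbr e U x by rewrite Nu set11.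
  by rewrite nbrP !inE => /andP[-> /(edge_neq e_irr)->].
exists (fun z => if z == x then other a b (g u) else g z).
rewrite -{1}(setD1K xU); apply: proper_on_setU1 => //; first exact: other_in.
move=> y yU exy.
have : y \in nbr e U x by rewrite nbrP exy andbT; move: yU; rewrite inE => /andP[].
rewrite Nu inE => /eqP->; rewrite eq_sym; apply: other_neq => //.
by case: Hg => H1 _; apply: H1.
Qed.

Lemma G1_noedge W : Gstep e (SB e 0) W -> forall y, y \in W -> noedge e (nbr e W y).
Proof. by case=> H _ y /H [[]|[]]. Qed.

Lemma B1_2colorable W (a b : 'I_4) : a != b -> Bd e 1 W -> exists g, proper_on [set a; b] W g.
Proof.
move=> ab /Bd_succ [cW G]; apply: tree_2colorable => //; exact: G1_noedge.
Qed.

Lemma S1_degree2 W : Sd e 1 W -> forall y, y \in W -> #|nbr e W y| = 2.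
Proof.
move=> /Sd_succ [[G _] nc HB] y yW; case: (G y yW) => [[_ //]|[_ H1]].
exfalso; apply: nc; apply: (contr_step yW); first exact: contr_K1.
by case: (HB y yW).
Qed.

Lemma card_sum_mem (S : {set T}) : #|S| = \sum_z (z \in S : nat).
Proof. by rewrite -sum1_card big_mkcond /=; apply: eq_bigr => z _; case: (z \in S). Qed.

Lemma bipartite_degree_sums W' g (a b : 'I_4) :
  (forall z, z \in W' -> (g z == a) || (g z == b)) ->
  (forall x y, x \in W' -> y \in W' -> e x y -> g x != g y) ->
  \sum_y ((y \in W') && (g y == a)) * #|nbr e W' y| =
  \sum_y ((y \in W') && (g y == b)) * #|nbr e W' y|.
Proof.
move=> Hab Hp.
pose chi y z : nat := [&& (y \in W') && (g y == a), (z \in W') && (g z == b) & e y z].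
have L : forall y, ((y \in W') && (g y == a)) * #|nbr e W' y| = \sum_z chi y z.
  move=> y; case Ay: ((y \in W') && (g y == a)); last first.
    by rewrite mul0n big1 // => z _; rewrite /chi Ay.
  move: Ay => /andP[yW /eqP gya].
  rewrite mul1n card_sum_mem; apply: eq_bigr => z _; rewrite /chi nbrP yW gya eqxx /=.
  case zW : (z \in W') => //=; case eyz : (e y z); rewrite ?andbT ?andbF //=.
  have := Hp y z yW zW eyz; rewrite gya.
  by have /orP[/eqP-> | /eqP->] := Hab z zW; rewrite ?eqxx.
have R : forall z, ((z \in W') && (g z == b)) * #|nbr e W' z| = \sum_y chi y z.
  move=> z; case Bz: ((z \in W') && (g z == b)); last first.
    by rewrite mul0n big1 // => y _; rewrite /chi Bz andbF.
  move: Bz => /andP[zW /eqP gzb].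
  rewrite mul1n card_sum_mem; apply: eq_bigr => y _; rewrite /chi nbrP zW gzb eqxx /=.
  rewrite (e_sym y z).
  case yW : (y \in W') => //=; case ezy : (e z y); rewrite ?andbT ?andbF //=.
  have := Hp z y zW yW ezy; rewrite gzb.
  by have /orP[/eqP-> | /eqP->] := Hab y yW; rewrite ?eqxx.
rewrite (eq_bigr _ (fun y _ => L y)) exchange_big /=.
by apply: eq_bigr => z _; rewrite R.
Qed.

Lemma mem_pair2 (a b A B k : 'I_4) : A \in [set a; b] -> B \in [set a; b] -> A != B ->
  k \in [set a; b] -> (k == A) || (k == B).
Proof.
rewrite !inE => /orP[/eqP->|/eqP->] /orP[/eqP->|/eqP->] //; rewrite ?eqxx //;
  move=> _ /orP[/eqP->|/eqP->]; rewrite ?eqxx ?orbT //.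
Qed.

Lemma sum_mul_eq1 (f : T -> nat) u : \sum_y f y * (y == u) = f u.
Proof.
rewrite (bigD1 u) //= eqxx muln1 big1 ?addn0 // => y /negbTE->; by rewrite muln0.
Qed.

(* Handshake count in each color class: the classes of a proper 2-coloring of
   a path carry the same number of edges, so they have the same size unless
   the two ends lie in the same class. *)
Lemma path_2coloring_even W u1 u2 g :
  u1 \in W -> u2 \in W -> u1 != u2 ->
  (forall y, y \in W -> #|nbr e W y| + ((y == u1) + (y == u2)) = 2) ->
  (forall z, z \in W -> (g z == g u1) || (g z == g u2)) ->
  (forall x y, x \in W -> y \in W -> e x y -> g x != g y) ->
  g u1 != g u2 -> ~~ odd #|W|.
Proof.
move=> u1W u2W u12 deg Hab Hg ne.
pose cls C y : nat := (y \in W) && (g y == C).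
have class_sum C : \sum_y cls C y * #|nbr e W y| + (cls C u1 + cls C u2) =
    2 * \sum_y cls C y.
  rewrite -(sum_mul_eq1 (cls C) u1) -(sum_mul_eq1 (cls C) u2) -!big_split /=.
  rewrite big_distrr /=; apply: eq_bigr => y _; rewrite /cls.
  case: (boolP (y \in W)) => yW /=; last by rewrite !mul0n.
  by case: (g y == C); rewrite ?mul0n ?muln0 // !mul1n muln1 (deg y yW).
have kA := class_sum (g u1); have kB := class_sum (g u2).
rewrite /cls u1W u2W /= eqxx (eq_sym (g u2)) (negbTE ne) /= in kA.
rewrite /cls u1W u2W /= eqxx (negbTE ne) /= in kB.
rewrite (bipartite_degree_sums Hab Hg) in kA; rewrite kA in kB.
have eq_classes : \sum_y cls (g u1) y = \sum_y cls (g u2) y.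
  by apply/eqP; rewrite /cls -(eqn_pmul2l (_ : 0 < 2)) // kB.
have -> : #|W| = \sum_y cls (g u1) y + \sum_y cls (g u2) y.
  rewrite card_sum_mem -big_split /=; apply: eq_bigr => y _; rewrite /cls.
  case: (boolP (y \in W)) => yW //=.
  have /orP[/eqP->|/eqP->] := Hab y yW; rewrite eqxx ?(negbTE ne) //.
  by rewrite eq_sym (negbTE ne).
by rewrite eq_classes addnn odd_double.
Qed.

Lemma S1_setD1_degree W x u1 u2 : Sd e 1 W -> x \in W ->
  nbr e W x = [set u1; u2] -> u1 != u2 ->
  forall y, y \in W :\ x -> #|nbr e (W :\ x) y| + ((y == u1) + (y == u2)) = 2.
Proof.
move=> S1W xW Nx u12 y; rewrite inE => /andP[_ yW].
have -> : nbr e (W :\ x) y = nbr e W y :\ x.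
  by apply/setP=> z; rewrite !inE; case: (z == x); rewrite ?andbF.
rewrite -(S1_degree2 S1W yW) (cardsD1 x (nbr e W y)) addnC; congr (_ + _).
have -> : x \in nbr e W y = (y \in nbr e W x) by rewrite !nbrP xW yW e_sym.
rewrite Nx !inE; case: (eqVneq y u1) => [->|]; last by case: (y == u2).
by rewrite (negbTE u12).
Qed.

Lemma even_S1_2colorable W (a b : 'I_4) : a != b -> Sd e 1 W -> ~~ odd #|W| ->
  exists g, proper_on [set a; b] W g.
Proof.
move=> ab S1W evW.
have /Sd_succ [[_ [x [xW _]]] _ HB] := S1W.
have [g [Hg1 Hg2]] := B1_2colorable ab (HB x xW).
have /cards2P [u1 [u2 [u12 Nx]]] : #|nbr e W x| == 2 by rewrite S1_degree2.
have inWx u : u \in nbr e W x -> u \in W :\ x.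
  by rewrite nbrP !inE => /andP[-> exu]; rewrite andbT (edge_neq e_irr exu).
have u1W : u1 \in W :\ x by apply: inWx; rewrite Nx !inE eqxx.
have u2W : u2 \in W :\ x by apply: inWx; rewrite Nx !inE eqxx orbT.
have same : g u1 = g u2.
  apply/eqP/negPn/negP => ne; move: evW.
  rewrite (cardsD1 x W) xW /= negbK; apply/negP.
  apply: (path_2coloring_even (g := g) u1W u2W u12 (S1_setD1_degree S1W xW Nx u12)) => //.
  by move=> z zW; apply: (mem_pair2 (a:=a) (b:=b)); rewrite ?Hg1.
exists (fun z => if z == x then other a b (g u1) else g z).
rewrite -(setD1K xW); apply: proper_on_setU1 => //; first exact: other_in.
move=> y yW exy.
have : y \in nbr e W x by rewrite nbrP exy andbT; move: yW; rewrite inE => /andP[].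
rewrite Nx !inE => /orP[/eqP->|/eqP->]; rewrite ?same eq_sym; apply: other_neq => //;
  apply: Hg1; rewrite ?u1W ?u2W //.
Qed.

Lemma S1_cycle_graph W : Sd e 1 W -> is_cycle_graph e W.
Proof.
move=> S1W; have deg2 := S1_degree2 S1W.
have cW : connected_in e W by apply: (@SB_connected _ _ e_sym e_irr 0); left.
move: S1W => /Sd_succ [[_ [y [yW _]]] _ _].
split; last by split.
have sub : nbr e W y \subset W :\ y.
  by apply/subsetP=> z; rewrite nbrP !inE => /andP[-> /(edge_neq e_irr)->].
have := subset_leq_card sub; rewrite deg2 // (cardsD1 y W) yW.
by case: #|W :\ y| => [|[|n]].
Qed.

Lemma two_coloring_at W (a b : 'I_4) y0 k : a != b -> k \in [set a; b] -> y0 \in W ->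
  (Bd e 1 W \/ (Sd e 1 W /\ ~~ odd #|W|)) ->
  exists g, proper_on [set a; b] W g /\ g y0 = k.
Proof.
move=> ab kab y0W H.
have [g [Hg1 Hg2]] : exists g, proper_on [set a; b] W g.
  by case: H => [/(B1_2colorable ab)|[/(even_S1_2colorable ab) H /H]].
case: (eqVneq (g y0) k) => [E|NE]; first by exists g.
exists (fun z => other a b (g z)); split; first split.
- by move=> x _; apply: other_in.
- move=> x y xW yW exy; have := Hg2 x y xW yW exy.
  move: (Hg1 x xW) (Hg1 y yW); rewrite /other !inE.
  by move=> /orP[/eqP->|/eqP->] /orP[/eqP->|/eqP->]; rewrite ?eqxx //;
    rewrite ?[b == a]eq_sym (negbTE ab) // eq_sym.
- move: (Hg1 y0 y0W) kab NE; rewrite /other !inE.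
  by move=> /orP[/eqP->|/eqP->] /orP[/eqP->|/eqP->]; rewrite ?eqxx //;
    rewrite ?[b == a]eq_sym (negbTE ab).
Qed.

Lemma third_color_unique P (a b x y : 'I_4) : #|P| = 3 -> a \in P -> b \in P -> a != b ->
  x \in P -> y \in P -> x != a -> x != b -> y != a -> y != b -> x = y.
Proof.
move=> cP aP bP ab xP yP xa xb ya yb.
have bPa : b \in P :\ a by rewrite !inE eq_sym ab.
have /cards1P [z Ez] : #|P :\ a :\ b| == 1.
  by move: cP; rewrite (cardsD1 a P) aP (cardsD1 b (P :\ a)) bPa => /eqP; rewrite !add1n !eqSS.
have : x \in P :\ a :\ b by rewrite !inE xa xb.
have : y \in P :\ a :\ b by rewrite !inE ya yb.
by rewrite Ez !inE => /eqP-> /eqP->.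
Qed.

Lemma proper_on_nbr_palette P A B w c : proper_on P A c -> w \in A -> B \subset A ->
  (forall z, z \in B -> e w z) -> proper_on (P :\ c w) B c.
Proof.
move=> [cP cp] wA /subsetP sBA adj; split; last by move=> x y /sBA xA /sBA; apply: cp.
move=> z zB; have zA := sBA z zB; rewrite !inE cP // andbT eq_sym.
by apply: cp => //; apply: adj.
Qed.

End TwoColorings.

Section SimpleConnectivity.
Variables (T : finType) (e : rel T).
Hypotheses (e_sym : symmetric e) (e_irr : irreflexive e).
Implicit Types (U V N : {set T}) (x y z u v w a b c : T) (p q s r L M ts : seq T).

Local Notation adj := (fun a b : T => (a == b) || e a b).
Definition within U p := all (fun z => z \in U) p.
Definition hstep_in U p q := hstep e p q /\ within U p /\ within U q.
Definition homotopic_in U := clos_refl_sym_trans (seq T) (hstep_in U).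
Definition simply_connected_in U := forall x q, closed_path e (x :: q) -> within U (x :: q) ->
  homotopic_in U (x :: q) [:: x].

Lemma closed_path_splice s a m m' r : closed_path e (s ++ a :: m ++ r) ->
  path adj a m' -> last a m' = last a m -> closed_path e (s ++ a :: m' ++ r).
Proof.
case: s => [|z s] /=.
  rewrite !cat_path !last_cat => -[/andP[_ H2] H3] Hm El.
  by rewrite El Hm H2 H3.
rewrite !cat_path !last_cat /= !cat_path !last_cat => -[/andP[H1 /andP[H2 /andP[_ H4]]] H5] Hm El.
by rewrite El H1 H2 Hm H4 H5.
Qed.

Lemma within_splice U s a m m' r : within U (s ++ a :: m ++ r) -> within U m' ->
  within U (s ++ a :: m' ++ r).
Proof. by rewrite /within !all_cat /= !all_cat => /andP[-> /andP[-> /andP[_ ->]]] ->. Qed.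

Lemma head_cat_cons x0 s a t t' : head x0 (s ++ a :: t) = head x0 (s ++ a :: t').
Proof. by case: s. Qed.

Lemma closed_path_last x0 p : closed_path e p -> last x0 p = head x0 p.
Proof. by case: p => // z q [_ /= ->]. Qed.

Lemma homotopic_in_step U p q : closed_path e p -> closed_path e q -> within U p -> within U q ->
  elem_step e p q -> homotopic_in U p q.
Proof. by move=> *; apply: rst_step. Qed.

Lemma homotopic_in_trans U p q r : homotopic_in U p q -> homotopic_in U q r -> homotopic_in U p r.
Proof. exact: rst_trans. Qed.

Lemma homotopic_in_stutter U s a r : closed_path e (s ++ a :: r) -> within U (s ++ a :: r) ->
  homotopic_in U (s ++ a :: a :: r) (s ++ a :: r).
Proof.
move=> Hc Hi; apply: homotopic_in_step => //.
- by apply: (@closed_path_splice s a [::] [:: a] r) => //=; rewrite /adj eqxx.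
- apply: (@within_splice U s a [::] [:: a] r) => //=; rewrite andbT.
  by move: Hi; rewrite /within all_cat /= => /andP[_ /andP[]].
- by exists s, r, a, a, a; right; left.
Qed.

Lemma homotopic_in_backtrack U s a b r : e a b -> b \in U ->
  closed_path e (s ++ a :: r) -> within U (s ++ a :: r) ->
  homotopic_in U (s ++ a :: b :: a :: r) (s ++ a :: r).
Proof.
move=> eab bU Hc Hi; apply: homotopic_in_step => //.
- apply: (@closed_path_splice s a [::] [:: b; a] r) => //=; rewrite /adj eab e_sym eab !orbT //.
- apply: (@within_splice U s a [::] [:: b; a] r) => //=; rewrite bU andbT.
  by move: Hi; rewrite /within all_cat /= => /andP[_ /andP[]].
- by exists s, r, a, b, a; left.
Qed.

Lemma homotopic_in_triangle U s a b c r : e a b -> e b c -> e a c -> b \in U ->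
  closed_path e (s ++ a :: c :: r) -> within U (s ++ a :: c :: r) ->
  homotopic_in U (s ++ a :: b :: c :: r) (s ++ a :: c :: r).
Proof.
move=> eab ebc eac bU Hc Hi; apply: homotopic_in_step => //.
- apply: (@closed_path_splice s a [:: c] [:: b; c] r) => //=; rewrite /adj eab ebc !orbT //.
- apply: (@within_splice U s a [:: c] [:: b; c] r) => //=; rewrite bU /=.
  by move: Hi; rewrite /within all_cat /= => /andP[_ /and3P[_ ->]].
- by exists s, r, a, b, c; right; right.
Qed.

Lemma elem_step_head x0 p q : elem_step e p q -> head x0 p = head x0 q.
Proof.
case=> [s1 [s2 [a [b [c [[-> ->]|[[-> ->]|[-> [-> _]]]]]]]]]; exact: head_cat_cons.
Qed.

Lemma homotopic_in_closed U p q : homotopic_in U p q ->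
  closed_path e p -> within U p -> closed_path e q /\ within U q.
Proof.
suff H : homotopic_in U p q ->
    (closed_path e p /\ within U p <-> closed_path e q /\ within U q).
  by move=> /H [H1 _] Hc Hi; apply: H1.
elim=> {p q} [p q [[? [? _]] [? ?]]|p|p q _ IH|p m q _ IH1 _ IH2] //.
- by rewrite IH.
- by rewrite IH1 IH2.
Qed.

Lemma homotopic_in_sub V U p q : V \subset U -> homotopic_in V p q -> homotopic_in U p q.
Proof.
move=> /subsetP sVU; elim=> {p q} [p q [H [Ip Iq]]|p|p q _ H|p m q _ H1 _ H2].
- apply: rst_step; split => //; split; apply/allP => z Hz; apply: sVU;
  by [move/allP: Ip; apply | move/allP: Iq; apply].
- exact: rst_refl.
- exact: rst_sym.
- exact: rst_trans H1 H2.
Qed.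

Lemma simply_connected_in_set1 U z : U = [set z] -> simply_connected_in U.
Proof.
move=> EU x q _ Hi.
have xz : x = z by move: Hi; rewrite /within /= EU inE => /andP[/eqP].
have Hq : all (pred1 z) q.
  have /andP[_ H] : (x \in U) && all (fun z => z \in U) q by [].
  by apply: sub_all H => y; rewrite EU inE.
subst x; elim: q Hq Hi => [|y q IH] /=; first by move=> *; apply: rst_refl.
move=> /andP[/eqP-> Hq] /andP[zU Hi].
apply: homotopic_in_trans (IH Hq _); last by [].
apply: (@homotopic_in_stutter U [::] z q); last by [].
rewrite /=; split; last by elim: q Hq {IH Hi} => //= y' q' IH' /andP[/eqP-> /IH'].
by elim: q Hq {IH Hi} => //= y' q' IH' /andP[/eqP-> /IH' ->]; rewrite eqxx.
Qed.

Lemma path_induced_within N u ts : path (induced e N) u ts -> all (fun z => z \in N) ts.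
Proof. by elim: ts u => //= t ts IH u /andP[/andP[/andP[_ _] ->] /IH]. Qed.

Lemma homotopic_in_sweep U x : x \in U -> forall ts u, path (induced e (nbr e U x)) u ts ->
  u \in nbr e U x -> forall s r, closed_path e (s ++ u :: x :: r) ->
  within U (s ++ u :: x :: r) -> homotopic_in U (s ++ u :: x :: r) (s ++ u :: ts ++ x :: r).
Proof.
move=> xU; elim=> [|t ts IH] u Hp uN s r Hc Hi; first exact: rst_refl.
move: Hp => /= /andP[/andP[/andP[eut _] tN] Hp].
have /andP[tU ext] : (t \in U) && e x t by rewrite -nbrP.
have /andP[uU exu] : (u \in U) && e x u by rewrite -nbrP.
have Hc' : closed_path e (s ++ u :: t :: x :: r).
  apply: (@closed_path_splice s u [:: x] [:: t; x] r) => //=.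
  by rewrite /= eut e_sym ext !orbT.
have Hi' : within U (s ++ u :: t :: x :: r).
  by apply: (@within_splice U s u [:: x] [:: t; x] r) => //=; rewrite tU xU.
apply: (@homotopic_in_trans U _ (s ++ u :: t :: x :: r)).
  apply: rst_sym; apply: homotopic_in_triangle => //; by rewrite e_sym.
have := IH t Hp tN (rcons s u) r; rewrite !cat_rcons; apply => //.
Qed.

Lemma homotopic_in_avoid U x p : x \notin p -> simply_connected_in (U :\ x) ->
  closed_path e p -> within U p ->
  homotopic_in U p [:: head x p].
Proof.
case: p => // b q Hx SCx Hc Hi.
apply: (homotopic_in_sub (subsetDl U [set x])); apply: SCx => //.
apply/allP=> z zp; rewrite !inE; move/allP: Hi => /(_ z zp) ->; rewrite andbT.
by apply: contraNneq Hx => <-.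
Qed.

Lemma closed_path_adj s a b t : closed_path e (s ++ a :: b :: t) -> (a == b) || e a b.
Proof.
case: s => [|z s] /=; first by case=> /andP[].
by case; rewrite cat_path => /andP[_ /= /and3P[]].
Qed.

Lemma path_induced_adj N u ts : path (induced e N) u ts -> path adj u ts.
Proof.
by elim: ts u => //= t ts IH u /andP[/andP[/andP[-> _] _] /IH ->]; rewrite orbT.
Qed.

Lemma homotopic_in_detour U x s u ts r : x \in U -> u \in nbr e U x ->
  path (induced e (nbr e U x)) u ts ->
  closed_path e (s ++ u :: x :: last u ts :: r) ->
  within U (s ++ u :: x :: last u ts :: r) ->
  homotopic_in U (s ++ u :: x :: last u ts :: r) (s ++ u :: ts ++ r).
Proof.
move=> xU uN Hp Hc Hi; set w := last u ts in Hc Hi *.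
have tsN := path_induced_within Hp.
have wN : w \in nbr e U x.
  by have := mem_last u ts; rewrite -/w inE => /orP[/eqP->|/(allP tsN)].
have Hc' : closed_path e (s ++ u :: ts ++ r).
  apply: (@closed_path_splice s u [:: x; w] ts r) => //; first exact: path_induced_adj Hp.
have Hi' : within U (s ++ u :: ts ++ r).
  apply: (@within_splice U s u [:: x; w] ts r) => //.
  by apply/allP=> z /(allP tsN); rewrite nbrP => /andP[].
apply: (homotopic_in_trans (homotopic_in_sweep xU Hp uN Hc Hi)).
have Eu : u :: ts = rcons (belast u ts) w by exact: lastI.
have -> : s ++ u :: ts ++ x :: w :: r = (s ++ belast u ts) ++ w :: x :: w :: r.
  by rewrite -catA -(cat_rcons w) -Eu.
have E : s ++ u :: ts ++ r = (s ++ belast u ts) ++ w :: r.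
  by rewrite -catA -(cat_rcons w) -Eu.
rewrite E; apply: homotopic_in_backtrack; rewrite -?E //.
by move: wN; rewrite nbrP e_sym => /andP[].
Qed.

(* Induction on the number of visits of [x]: each visit [u, x, w] is replaced
   by a path from [u] to [w] in the link of [x], until the path lies in
   [U :\ x]. *)
Lemma homotopic_in_setD1_base U x : x \in U -> connected_in e (nbr e U x) ->
  simply_connected_in (U :\ x) ->
  forall n p, count_mem x p <= n -> closed_path e p -> within U p ->
  head x p != x -> homotopic_in U p [:: head x p].
Proof.
move=> xU cN SCx; elim=> [|n IH] p.
  rewrite leqn0 => c0 Hc Hi _; apply: homotopic_in_avoid => //.
  by rewrite -has_pred1 has_count (eqP c0).
move=> cp Hc Hi hx.
have stutter S R : count_mem x (S ++ x :: x :: R) <= n.+1 ->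
    closed_path e (S ++ x :: x :: R) -> within U (S ++ x :: x :: R) ->
    head x (S ++ x :: x :: R) != x ->
    homotopic_in U (S ++ x :: x :: R) [:: head x (S ++ x :: x :: R)].
  move=> c Hc1 Hi1 hx1.
  have Hc' : closed_path e (S ++ x :: R) by apply: (@closed_path_splice S x [:: x] [::] R).
  have Hi' : within U (S ++ x :: R) by apply: (@within_splice U S x [:: x] [::] R).
  apply: homotopic_in_trans (homotopic_in_stutter Hc' Hi') _.
  rewrite (head_cat_cons _ S x (x :: R) R) in hx1 *; apply: IH => //.
  by move: c; rewrite !count_cat /= eqxx !add1n addnS ltnS.
case: (boolP (x \in p)) => xp; last by apply: homotopic_in_avoid.
case/splitPr: xp cp Hc Hi hx => s r.
case/lastP: s => [|s u] cp Hc Hi hx; first by rewrite /= eqxx in hx.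
rewrite cat_rcons in cp Hc Hi hx *.
case: (eqVneq u x) => [Eu|ux]; first by subst u; exact: stutter.
case: r cp Hc Hi hx => [|w r] cp Hc Hi hx.
  by have := closed_path_last x Hc; rewrite last_cat /= => E; rewrite -E eqxx in hx.
case: (eqVneq w x) => [Ew|wx].
  by subst w; rewrite -cat_rcons in cp Hc Hi hx *; exact: stutter.
have uN : u \in nbr e U x.
  have uU : u \in U by move/allP: Hi; apply; rewrite mem_cat inE eqxx orbT.
  have := closed_path_adj Hc; rewrite (negbTE ux) /= => eux; by rewrite nbrP uU e_sym.
have wN : w \in nbr e U x.
  have wU : w \in U by move/allP: Hi; apply; rewrite mem_cat !inE eqxx !orbT.
  have := @closed_path_adj (rcons s u) x w r; rewrite cat_rcons => /(_ Hc).
  by rewrite eq_sym (negbTE wx) /= => exw; rewrite nbrP wU.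
have /connectP [ts Hp Ew] := cN u w uN wN.
rewrite Ew in cp Hc Hi hx *.
have detour := homotopic_in_detour xU uN Hp Hc Hi.
have [Hc' Hi'] := homotopic_in_closed detour Hc Hi.
apply: homotopic_in_trans detour _.
rewrite (head_cat_cons _ s u (x :: last u ts :: r) (ts ++ r)) in hx *.
apply: IH => //; move: cp; rewrite !count_cat /= count_cat -Ew (negbTE ux) (negbTE wx) eqxx.
have -> : count_mem x ts = 0.
  apply/eqP; rewrite -leqn0 leqNgt -has_count has_pred1.
  by apply/negP => /(allP (path_induced_within Hp)); rewrite nbrP e_irr andbF.
by rewrite /= !add0n add1n addnS ltnS.
Qed.

Lemma closed_path_wrap x L : closed_path e L -> e x (head x L) ->
  closed_path e (x :: L ++ [:: x]).
Proof.
case: L => // z q [Hp Hl] /= exz; split; last by rewrite last_cat.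
by rewrite /= cat_path Hp Hl /= exz (e_sym z x) exz !orbT.
Qed.

Lemma homotopic_in_head U x0 p q : homotopic_in U p q -> head x0 p = head x0 q.
Proof.
elim=> {p q} [p q [[_ [_ /(elem_step_head x0)]]]|p|p q _ ->|p m q _ -> _ ->] //.
Qed.

Lemma elem_step_wrap x L L' : elem_step e L L' ->
  elem_step e (x :: L ++ [:: x]) (x :: L' ++ [:: x]).
Proof.
case=> [s1 [s2 [a [b [c H]]]]]; exists (x :: s1), (s2 ++ [:: x]), a, b, c.
by case: H => [[-> ->]|[[-> ->]|[-> [-> Ht]]]]; rewrite /= -!catA; [left|right; left|right; right].
Qed.

Lemma homotopic_in_wrap U x L L' : x \in U -> homotopic_in U L L' ->
  closed_path e L -> within U L -> e x (head x L) ->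
  homotopic_in U (x :: L ++ [:: x]) (x :: L' ++ [:: x]).
Proof.
move=> xU HLL'; elim: HLL' => {L L'} [L L' Hs|L|L L' HLL' IH|L M L' HLM IH1 _ IH2] Hc Hi hx.
- have [[_ [Hc' Hst]] [_ Hi']] := Hs; apply: rst_step; split; first split.
  + exact: closed_path_wrap.
  + by split; [apply: closed_path_wrap; rewrite // -(elem_step_head x Hst) | exact: elem_step_wrap].
  + by split; rewrite /within /= all_cat /= xU /= ?andbT.
- exact: rst_refl.
- have [HcL HiL] : closed_path e L /\ within U L.
    by apply: (homotopic_in_closed _ Hc Hi); apply: rst_sym.
  by apply: rst_sym; apply: IH; rewrite // (homotopic_in_head x HLL').
- have [HcM HiM] := homotopic_in_closed HLM Hc Hi.
  apply: homotopic_in_trans (IH1 Hc Hi hx) (IH2 HcM HiM _).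
  by rewrite -(homotopic_in_head x HLM).
Qed.

(* A closed path based at [x] is conjugated by a backtrack [x, u, x] into one
   based at [u], which the base case contracts without moving its base. *)
Lemma simply_connected_in_setD1 U x : x \in U -> connected_in e (nbr e U x) ->
  (exists u, u \in nbr e U x) -> simply_connected_in (U :\ x) -> simply_connected_in U.
Proof.
move=> xU cN [u uN] SCx b q Hc Hi.
case: (eqVneq b x) => [Eb|bx]; last first.
  by have := homotopic_in_setD1_base xU cN SCx (leqnn _) Hc Hi; apply.
subst b; have /andP[uU exu] : (u \in U) && e x u by rewrite -nbrP.
case/lastP: q Hc Hi => [|q z] Hc Hi; first exact: rst_refl.
have zx : z = x by case: Hc => _; rewrite last_rcons.
subst z; set L := u :: x :: q ++ [:: x; u].
have HcL : closed_path e L.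
  case: Hc; rewrite rcons_path => /andP[Hq Hlast] _.
  split; last by rewrite /L /= last_cat.
  by rewrite /L /= cat_path Hq /= Hlast exu e_sym exu !orbT.
have HiL : within U L.
  by move: Hi; rewrite /L /within /= all_rcons all_cat /= xU uU => /andP[_ /andP[_ ->]].
have Hc1 : closed_path e ([::] ++ x :: [:: u; x] ++ rcons q x).
  apply: (@closed_path_splice [::] x [::] [:: u; x]) => //=.
  by rewrite exu e_sym exu !orbT.
have Hi1 : within U ([::] ++ x :: [:: u; x] ++ rcons q x).
  by apply: (@within_splice U [::] x [::] [:: u; x]) => //=; rewrite uU xU.
apply: homotopic_in_trans; first apply: rst_sym.
  exact: (@homotopic_in_backtrack U [::] x u (rcons q x)).
rewrite /= -cats1 -/([:: x, u, x & q] ++ [:: x]).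
apply: homotopic_in_trans; first apply: rst_sym.
  apply: (@homotopic_in_backtrack U (x :: u :: x :: q) x u [::]) => //.
  - by move: Hc1; rewrite /= cats1.
  - by move: Hi1; rewrite /= cats1.
have -> : (x :: u :: x :: q) ++ [:: x; u; x] = x :: L ++ [:: x] by rewrite /L /= -catA.
have hL := homotopic_in_setD1_base xU cN SCx (leqnn _) HcL HiL (edge_neq e_irr exu).
apply: homotopic_in_trans (homotopic_in_wrap xU hL HcL HiL exu) _.
by apply: (@homotopic_in_backtrack U [::] x u [::]) => //; rewrite /within /= xU.
Qed.

Lemma contractible_simply_connected U : contractible e U -> simply_connected_in U.
Proof.
elim=> {U} [U /eqP/cards1P [z ->]|U x xU cN _ _ IH]; first exact: simply_connected_in_set1.
apply: (simply_connected_in_setD1 xU) => //; first exact: (contractible_connected e_sym e_irr cN).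
exact: (contractible_nonempty cN).
Qed.

Lemma SB2_simply_connected U : Sd e 2 U \/ Bd e 2 U -> simply_connected_in U.
Proof.
case=> [/Sd_succ [[Hl [x [xU _]]] _ HB]|/Bd_succ [/contractible_simply_connected //]].
apply: (simply_connected_in_setD1 xU).
- exact: (@SB_connected _ _ e_sym e_irr 0 _ (Hl x xU)).
- exact: (SB_nonempty (Hl x xU)).
- by have /Bd_succ [/contractible_simply_connected] := HB x xU.
Qed.

Lemma simply_connected_in_setT : simply_connected e -> simply_connected_in [set: T].
Proof.
case=> _ H x0 q0 Hc _; move: (H x0 q0 Hc).
suff G : forall p q, homotopic e p q -> homotopic_in [set: T] p q by apply: G.
move=> p1 q1; elim=> {p1 q1} [p q Hs|p|p q _ IH|p m q _ IH1 _ IH2].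
- apply: rst_step; split => //; split; apply/allP => z _; exact: in_setT.
- exact: rst_refl.
- exact: rst_sym.
- exact: rst_trans IH1 IH2.
Qed.

End SimpleConnectivity.

Section Monodromy.
Variables (T : finType) (e : rel T).
Hypotheses (e_sym : symmetric e) (e_irr : irreflexive e).
Implicit Types (x y z u v w a b : T) (p q s r t : seq T) (c d : T -> 'I_4).
Local Notation adj := (fun a b : T => (a == b) || e a b).

Variables (U : {set T}) (P : {set 'I_4}).

Definition star v := v |: nbr e U v.
Definition star_coloring v c := proper_on e P (star v) c.
Definition agree (A : {set T}) c d := forall z, z \in A -> c z = d z.

Lemma star_self v : v \in star v.
Proof. exact: setU11. Qed.

Lemma in_star v z : (z \in star v) = (z == v) || (z \in nbr e U v).
Proof. exact: in_setU1. Qed.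

Lemma star_nbr v w : w \in U -> e v w -> w \in star v.
Proof. by move=> wU evw; rewrite !inE wU evw orbT. Qed.

Lemma agree_sym A c d : agree A c d -> agree A d c.
Proof. by move=> H z /H ->. Qed.

Lemma agree_trans A c1 c2 c3 : agree A c1 c2 -> agree A c2 c3 -> agree A c1 c3.
Proof. by move=> H1 H2 z zA; rewrite H1 ?H2. Qed.

Lemma agree_sub (A A' : {set T}) c d : A' \subset A -> agree A c d -> agree A' c d.
Proof. by move=> /subsetP s H z /s /H. Qed.

Lemma star_coloring_agree v c d :
  agree (star v) c d -> star_coloring v c -> star_coloring v d.
Proof. exact: proper_agree. Qed.

(* Stationary steps [v = w] are allowed because the closed paths of the
   homotopy relation may stutter. *)
Definition transport_step v w c c' := star_coloring w c' /\
  ((v = w /\ agree (star v) c c') \/ (e v w /\ agree (star v :&: star w) c c')).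

Fixpoint transport p c c' {struct p} : Prop :=
  match p with
  | [::] => False
  | v :: q => match q with
              | [::] => agree (star v) c c'
              | w :: _ => exists c1, transport_step v w c c1 /\ transport q c1 c'
              end
  end.

Lemma transport_cons v w q c c' : transport [:: v, w & q] c c' =
  exists c1, transport_step v w c c1 /\ transport (w :: q) c1 c'.
Proof. by []. Qed.

Lemma transport_start v q c d c' :
  transport (v :: q) c c' -> agree (star v) c d -> transport (v :: q) d c'.
Proof.
case: q => [|w q] /=; first by move=> H1 H2; apply: agree_trans (agree_sym H2) H1.
move=> [c1 [[g1 [[E H]|[evw H]]] Ht]] Hcd; exists c1; split => //; split => //.
  by left; split => //; apply: agree_trans (agree_sym Hcd) H.
right; split => //; apply: agree_trans H.
by apply: agree_sub (agree_sym Hcd); apply: subsetIl.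
Qed.

Definition walk_in p :=
  if p is v :: q then path adj v q /\ within U (v :: q) else False.

Hypothesis star_extend : forall v w, v \in U -> w \in U -> e v w ->
  forall c, star_coloring v c ->
  exists c', star_coloring w c' /\ agree (star v :&: star w) c c'.
Hypothesis star_rigid_edge : forall v w, v \in U -> w \in U -> e v w ->
  forall c1 c2, star_coloring w c1 -> star_coloring w c2 ->
  agree (star v :&: star w) c1 c2 -> agree (star w) c1 c2.
Hypothesis star_rigid_triangle : forall a b w, a \in U -> b \in U -> w \in U ->
  e a b -> e b w -> e a w ->
  forall d1 d2, star_coloring w d1 -> star_coloring w d2 ->
  agree (star a :&: star b :&: star w) d1 d2 -> agree (star w) d1 d2.

Lemma transport_total v q c : walk_in (v :: q) -> star_coloring v c ->
  exists c', transport (v :: q) c c' /\ star_coloring (last v q) c'.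
Proof.
elim: q v c => [|w q IH] v c /=; first by move=> _ gc; exists c.
move=> [/andP[avw Hp] /andP[vU /andP[wU Hi]]] gc.
have [c1 [g1 S1]] : exists c1, transport_step v w c c1.
  case: (eqVneq v w) avw => [<-|nvw] /= avw.
    by exists c; split => //; left.
  have [c' [g' H']] := star_extend vU wU avw gc; by exists c'; split => //; right.
have [c' [Ht gc']] := IH w c1 (conj Hp (introT andP (conj wU Hi))) g1.
by exists c'; split => //; exists c1.
Qed.

Lemma transport_unique v q c d c1 d1 :
  walk_in (v :: q) -> star_coloring v c -> agree (star v) c d ->
  transport (v :: q) c c1 -> transport (v :: q) d d1 -> agree (star (last v q)) c1 d1.
Proof.
elim: q v c d => [|w q IH] v c d /=.
  move=> _ _ Hcd H1 H2; apply: agree_trans (agree_sym H1) _; exact: agree_trans Hcd H2.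
move=> [/andP[avw Hp] /andP[vU /andP[wU Hi]]] gc Hcd [c2 [[g2 S2] T2]] [d2 [[h2 S3] T3]].
apply: (IH w c2 d2) => //; first by split => //; apply/andP.
case: S2 => [[E2 A2]|[e2 A2]]; case: S3 => [[E3 A3]|[e3 A3]].
- subst w; apply: agree_trans (agree_sym A2) _; exact: agree_trans Hcd A3.
- by subst w; rewrite e_irr in e3.
- by subst w; rewrite e_irr in e2.
- apply: (star_rigid_edge vU wU e2) => //; apply: agree_trans (agree_sym A2) _.
  apply: agree_trans A3; apply: agree_sub Hcd; exact: subsetIl.
Qed.

Lemma transport_split s x t c c' : transport (s ++ x :: t) c c' ->
  exists c1, transport (rcons s x) c c1 /\ transport (x :: t) c1 c'.
Proof.
elim: s c => [|y s IH] c /=; first by move=> H; exists c.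
case: s IH => [|w s] IH /= [c2 [S2 T2]].
  by exists c2; split => //; exists c2.
have [c1 [H1 H2]] := IH c2 T2; exists c1; split => //; by exists c2.
Qed.

Lemma transport_catI s x t c c1 c' : transport (rcons s x) c c1 -> transport (x :: t) c1 c' ->
  transport (s ++ x :: t) c c'.
Proof.
elim: s c => [|y s IH] c /=; first by move=> H1 H2; apply: transport_start H2 (agree_sym H1).
case: s IH => [|w s] IH /= [c2 [S2 T2]] H; exists c2; split => //.
  by apply: transport_start H (agree_sym T2).
exact: IH T2 H.
Qed.

Lemma transport_step_rev v w c c1 :
  star_coloring v c -> transport_step v w c c1 -> transport_step w v c1 c.
Proof.
move=> gc [g1 [[E A]|[evw A]]]; split => //.
  by left; subst w; split => //; apply: agree_sym.
right; split; first by rewrite e_sym.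
by rewrite setIC; apply: agree_sym.
Qed.

Lemma transport_star_coloring v q c c' :
  transport (v :: q) c c' -> star_coloring v c -> star_coloring (last v q) c'.
Proof.
elim: q v c => [|w q IH] v c /=; first by move=> H g; apply: star_coloring_agree H g.
by move=> [c1 [[g1 _] T1]] _; apply: IH T1 g1.
Qed.

Lemma transport_rev v q c c' :
  transport (v :: q) c c' -> star_coloring v c -> transport (rev (v :: q)) c' c.
Proof.
elim: q v c => [|w q IH] v c; first by move=> H _; apply: agree_sym.
rewrite transport_cons => -[c1 [S1 T1]] gc.
have := IH w c1 T1 (proj1 S1).
move=> H; rewrite rev_cons in H; rewrite rev_cons rev_cons.
rewrite -cats1 -cats1 -catA; apply: (transport_catI (s:=rev q) (x:=w)); first exact: H.
by exists c; split => //; apply: transport_step_rev.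
Qed.

Lemma closed_path_walk_in p : closed_path e p -> within U p -> walk_in p.
Proof. by case: p => // v q [Hp _] Hi. Qed.

Lemma walk_in_prefix s t : walk_in (s ++ t) -> s != [::] -> walk_in s.
Proof.
case: s => // v s /= [Hp Hi] _; split.
  by move: Hp; rewrite cat_path => /andP[].
by move: Hi; rewrite /within /= all_cat => /andP[-> /andP[]].
Qed.

Lemma walk_in_suffix s x t : walk_in (s ++ x :: t) -> walk_in (x :: t).
Proof.
case: s => // v s /= [Hp Hi]; split.
  by move: Hp; rewrite cat_path => /andP[_ /= /andP[]].
by move: Hi; rewrite /within /= all_cat => /andP[_ /andP[]].
Qed.

Lemma transport_unique_seq p x0 c c1 d1 : walk_in p -> star_coloring (head x0 p) c ->
  transport p c c1 -> transport p c d1 -> agree (star (last x0 p)) c1 d1.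
Proof. case: p => // v q Hu gc; exact: transport_unique. Qed.

Lemma transport_star_coloring_seq p x0 c c' :
  transport p c c' -> star_coloring (head x0 p) c -> star_coloring (last x0 p) c'.
Proof. case: p => // v q; exact: transport_star_coloring. Qed.

Lemma transport_backtrack a b s ca ca' c1 c2 : walk_in (a :: b :: a :: s) ->
  star_coloring a ca -> agree (star a) ca ca' ->
  transport (a :: b :: a :: s) ca c1 -> transport (a :: s) ca' c2 ->
  agree (star (last a s)) c1 c2.
Proof.
move=> Up ga Aa Ta Tb.
have Us : walk_in (a :: s) by apply: (walk_in_suffix (s := [:: a; b])).
have [aU bU] : a \in U /\ b \in U by case: Up => _; rewrite /within /= => /and3P[].
move: Ta; rewrite !transport_cons => -[cb [[_ Sb] [ca2 [[ga2 Sa2] Ta2]]]].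
apply: (transport_unique Us ga2 _ Ta2 Tb); apply: agree_trans Aa.
case: Sb => [[Eb Ab]|[eab Ab]]; case: Sa2 => [[Ea Aa2]|[eba Aa2]].
- by subst b; apply: agree_trans (agree_sym Aa2) (agree_sym Ab).
- by subst b; rewrite e_irr in eba.
- by subst b; rewrite e_irr in eab.
- apply: agree_sym; apply: (star_rigid_edge bU aU eba) => //.
  by move=> z zI; rewrite Ab ?Aa2 // setIC.
Qed.

Lemma transport_stutter a s ca ca' c1 c2 : walk_in (a :: a :: s) ->
  agree (star a) ca ca' ->
  transport (a :: a :: s) ca c1 -> transport (a :: s) ca' c2 ->
  agree (star (last a s)) c1 c2.
Proof.
move=> Up Aa Ta Tb.
have Us : walk_in (a :: s) by apply: (walk_in_suffix (s := [:: a])).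
move: Ta; rewrite transport_cons => -[cx [[gx Sx] Tx]].
apply: (transport_unique Us gx _ Tx Tb).
case: Sx => [[_ Ax]|[eaa _]]; last by rewrite e_irr in eaa.
exact: agree_trans (agree_sym Ax) Aa.
Qed.

Lemma transport_triangle a b w s ca ca' c1 c2 : e a b -> e b w -> e a w ->
  walk_in (a :: b :: w :: s) -> agree (star a) ca ca' ->
  transport (a :: b :: w :: s) ca c1 -> transport (a :: w :: s) ca' c2 ->
  agree (star (last w s)) c1 c2.
Proof.
move=> eab ebw eaw Up Aa Ta Tb.
have Uw : walk_in (w :: s) by apply: (walk_in_suffix (s := [:: a; b])).
have [aU bU wU] : [/\ a \in U, b \in U & w \in U].
  by case: Up => _; rewrite /within /= => /and4P[].
move: Ta; rewrite !transport_cons => -[cb [[_ Sb] [cw [[gw Sw] Tw]]]].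
move: Tb; rewrite transport_cons => -[cw' [[gw' Sw'] Tw']].
case: Sb => [[Eb _]|[_ Ab]]; first by subst b; rewrite e_irr in eab.
case: Sw => [[Ew _]|[_ Aw]]; first by subst w; rewrite e_irr in ebw.
case: Sw' => [[Ew _]|[_ Aw']]; first by subst w; rewrite e_irr in eaw.
apply: (transport_unique Uw gw _ Tw Tw').
apply: (star_rigid_triangle aU bU wU eab ebw eaw) => // z.
rewrite !in_setI => /andP[/andP[za zb] zw].
rewrite -Aw ?in_setI ?zb ?zw // -Ab ?in_setI ?za ?zb // Aa //.
by rewrite Aw' // in_setI za zw.
Qed.

Lemma hstep_transport p q x0 c c1 c2 : hstep_in e U p q ->
  star_coloring (head x0 p) c ->
  transport p c c1 -> transport q c c2 -> agree (star (last x0 p)) c1 c2.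
Proof.
move=> [[Hcp [Hcq Hs]] [Ip Iq]] gc T1 T2.
have Up := closed_path_walk_in Hcp Ip.
have common_prefix s a t t' : p = s ++ a :: t -> q = s ++ a :: t' ->
    exists ca ca', [/\ transport (a :: t) ca c1, transport (a :: t') ca' c2,
      agree (star a) ca ca', walk_in (a :: t) & star_coloring a ca].
  move=> Ep Eq; rewrite Ep in T1 Up gc; rewrite Eq in T2.
  have [ca [Ta1 Ta2]] := transport_split T1; have [ca' [Tb1 Tb2]] := transport_split T2.
  have Ur : walk_in (rcons s a).
    by apply: (walk_in_prefix (t := t)); [rewrite cat_rcons | case: (s)].
  have gr : star_coloring (head x0 (rcons s a)) c.
    by rewrite -cats1 (head_cat_cons _ _ _ _ t).
  exists ca, ca'; split => //.
  - by have := transport_unique_seq Ur gr Ta1 Tb1; rewrite last_rcons.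
  - exact: walk_in_suffix Up.
  - by have := transport_star_coloring_seq Ta1 gr; rewrite last_rcons.
case: Hs => [s1 [s2 [a [b [w [[Ep Eq]|[[Ep Eq]|[Ep [Eq [eab [ebw eaw]]]]]]]]]]];
  rewrite Ep last_cat /=.
- have [ca [ca' [Ta Tb Aa Ua ga]]] := common_prefix s1 a (b :: a :: s2) s2 Ep Eq.
  exact: transport_backtrack Ua ga Aa Ta Tb.
- have [ca [ca' [Ta Tb Aa Ua ga]]] := common_prefix s1 a (a :: s2) s2 Ep Eq.
  exact: transport_stutter Ua Aa Ta Tb.
- have [ca [ca' [Ta Tb Aa Ua ga]]] := common_prefix s1 a (b :: w :: s2) (w :: s2) Ep Eq.
  exact: transport_triangle eab ebw eaw Ua Aa Ta Tb.
Qed.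

Lemma elem_step_last x0 p q : elem_step e p q -> last x0 p = last x0 q.
Proof.
case=> [s1 [s2 [a [b [c [[-> ->]|[[-> ->]|[-> [-> _]]]]]]]]]; by rewrite !last_cat.
Qed.

Lemma transport_exists p x0 c :
  walk_in p -> star_coloring (head x0 p) c -> exists c', transport p c c'.
Proof. case: p => // v q Hu gc; have [c' [H _]] := transport_total Hu gc; by exists c'. Qed.

Lemma homotopic_transport x0 p q : homotopic_in e U p q -> closed_path e p -> within U p ->
  [/\ head x0 p = head x0 q, last x0 p = last x0 q &
    forall c c1 c2, star_coloring (head x0 p) c -> transport p c c1 -> transport q c c2 ->
      agree (star (last x0 p)) c1 c2].
Proof.
elim=> {p q} [p q Hs|p|p q Hpq IH|p m q Hpm IH1 _ IH2] Hc Hi.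
- have [[_ [_ Hst]] _] := Hs.
  split; [exact: elem_step_head Hst | exact: elem_step_last Hst |].
  by move=> c c1 c2; apply: hstep_transport.
- by split => // c c1 c2; apply: transport_unique_seq (closed_path_walk_in Hc Hi).
- have [Hcp Hip] : closed_path e p /\ within U p.
    by apply: (homotopic_in_closed _ Hc Hi); apply: rst_sym.
  have [Eh El H] := IH Hcp Hip; split => // c c1 c2 gc T1 T2.
  by rewrite -El; apply: agree_sym; apply: H T2 T1; rewrite Eh.
have [Eh1 El1 H1] := IH1 Hc Hi.
have [Hcm Him] := homotopic_in_closed Hpm Hc Hi.
have [Eh2 El2 H2] := IH2 Hcm Him.
split; [by rewrite Eh1 | by rewrite El1 | move=> c c1 c2 gc T1 T2].
have gm : star_coloring (head x0 m) c by rewrite -Eh1.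
have [cm Tm] := transport_exists (closed_path_walk_in Hcm Him) gm.
by apply: agree_trans (H1 _ _ _ gc T1 Tm) _; rewrite El1; apply: H2 Tm T2.
Qed.

Lemma walk_in_induced v0 ps : v0 \in U -> path (induced e U) v0 ps -> walk_in (v0 :: ps).
Proof.
move=> v0U Hp; split; first exact: path_induced_adj Hp.
by rewrite /within /= v0U; apply: path_induced_within Hp.
Qed.

(* Going out along [ps1] and back along [ps2] is a closed path, null-homotopic
   by simple connectivity, so the round trip transports [c0] to itself. *)
Lemma transport_path_independent v0 c0 ps1 ps2 c1 c2 :
  v0 \in U -> simply_connected_in e U -> star_coloring v0 c0 ->
  path (induced e U) v0 ps1 -> path (induced e U) v0 ps2 -> last v0 ps1 = last v0 ps2 ->
  transport (v0 :: ps1) c0 c1 -> transport (v0 :: ps2) c0 c2 ->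
  agree (star (last v0 ps1)) c1 c2.
Proof.
move=> v0U sU g0 P1 P2 E T1 T2; set v := last v0 ps1 in E *.
set t := rev (belast v0 ps2).
have Erev : rev (v0 :: ps2) = v :: t by rewrite /t (lastI v0 ps2) rev_rcons E.
have U1 := walk_in_induced v0U P1; have U2 := walk_in_induced v0U P2.
have Ut : walk_in (v :: t).
  split; last by move: U2 => [_]; rewrite -Erev /within all_rev.
  have Es : (fun x y : T => adj y x) =2 adj by move=> a b /=; rewrite eq_sym e_sym.
  by rewrite /t E rev_path (eq_path Es); case: U2.
have g1 : star_coloring v c1 by apply: transport_star_coloring T1 g0.
have [cL [TL _]] := transport_total Ut g1.
have TLL : transport (v0 :: ps1 ++ t) c0 cL.
  have -> : v0 :: ps1 ++ t = belast v0 ps1 ++ v :: t by rewrite -cat_rcons /v -lastI.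
  by apply: transport_catI TL; rewrite /v -lastI.
have lastL : last v0 (ps1 ++ t) = v0.
  by rewrite last_cat -/v; have := congr1 (last v0) Erev; rewrite rev_cons last_rcons.
have HcL : closed_path e (v0 :: ps1 ++ t).
  by split => //; rewrite cat_path; case: U1 => -> _; case: Ut.
have HiL : within U (v0 :: ps1 ++ t).
  rewrite /within /= all_cat v0U /=; apply/andP; split.
  - by case: U1 => _ /andP[].
  - by case: Ut => _ /andP[].
have AL : agree (star v0) cL c0.
  have [_ _ H] := homotopic_transport v0 (sU v0 (ps1 ++ t) HcL HiL) HcL HiL.
  by have := H c0 cL c0 g0 TLL (fun z _ => erefl); rewrite /= lastL.
have T2' : transport (v0 :: ps2) cL c1 by have := transport_rev TL g1; rewrite -Erev revK.
by have := transport_unique U2 g0 (fun z _ => erefl) (transport_start T2' AL) T2; rewrite -E.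
Qed.

Lemma transport_rcons v0 ps w c c' c'' : transport (v0 :: ps) c c' ->
  transport_step (last v0 ps) w c' c'' -> transport (v0 :: rcons ps w) c c''.
Proof.
move=> Tp S; rewrite -rcons_cons (lastI v0 ps) -cats1 cat_rcons.
by apply: (transport_catI (c1 := c')); [rewrite -lastI | exists c''; split].
Qed.

(* The global coloring at [v] is read off any star coloring transported from
   [v0] to [v] along a path; by [transport_path_independent] the pick of
   path does not matter. *)
Theorem monodromy v0 c0 : v0 \in U -> connected_in e U -> simply_connected_in e U ->
  star_coloring v0 c0 -> exists f, proper_on e P U f /\ agree (star v0) f c0.
Proof.
move=> v0U cU sU g0.
pose reach v c := exists ps,
  [/\ path (induced e U) v0 ps, last v0 ps = v & transport (v0 :: ps) c0 c].
have reach_coloring v c : reach v c -> star_coloring v c.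
  by case=> ps [_ <- Tp]; apply: transport_star_coloring Tp g0.
have reach_in v c : reach v c -> v \in U.
  case=> ps [Hp <- _]; case: (walk_in_induced v0U Hp) => _ /allP; apply.
  exact: mem_last.
have reach_unique v c1 c2 : reach v c1 -> reach v c2 -> agree (star v) c1 c2.
  case=> [ps1 [P1 E1 T1]] [ps2 [P2 E2 T2]]; rewrite -E1.
  by apply: (transport_path_independent v0U sU g0 P1 P2); rewrite ?E1 ?E2.
have reach_step v w c c' : reach v c -> w \in U -> e v w -> star_coloring w c' ->
    agree (star v :&: star w) c c' -> reach w c'.
  case=> ps [Hp Ev Tp] wU evw gc' A; exists (rcons ps w); split.
  - by rewrite rcons_path Hp Ev /= evw (reach_in v c) //; exists ps.
  - by rewrite last_rcons.
  - by apply: transport_rcons Tp _; rewrite Ev; split => //; right.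
have reach_star v c w : reach v c -> w \in U -> e v w ->
    exists2 c', reach w c' & agree (star v :&: star w) c c'.
  move=> Rv wU evw; have vU := reach_in v c Rv.
  have [c'' [gc'' A]] := star_extend vU wU evw (reach_coloring v c Rv).
  by exists c''; first exact: reach_step Rv wU evw gc'' A.
pose pick v := epsilon (inhabits c0) (reach v).
have reach_pick v : v \in U -> reach v (pick v).
  move=> vU; apply: epsilon_spec.
  have /connectP [ps Hp Ev] := cU v0 v v0U vU.
  have [c [Tp _]] := transport_total (walk_in_induced v0U Hp) g0.
  by exists c, ps.
have pickE v c : reach v c -> pick v v = c v.
  move=> Rv; apply: (reach_unique v _ _ (reach_pick v (reach_in v c Rv)) Rv).
  exact: star_self.
exists (fun v => pick v v); split; first split.
- by move=> v vU; have [H _] := reach_coloring _ _ (reach_pick v vU); apply/H/star_self.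
- move=> v w vU wU evw.
  have [c' Rw A] := reach_star v _ w (reach_pick v vU) wU evw.
  have wv : v \in star w by apply: star_nbr; rewrite // e_sym.
  rewrite (pickE w c' Rw) (A v); last by rewrite in_setI star_self wv.
  have [_ H] := reach_coloring _ _ Rw; by apply: H; rewrite ?star_self.
- move=> z zS; have R0 : reach v0 c0 by exists [::].
  case/setU1P: zS => [->|zN]; first exact: pickE.
  have /andP[zU ez] : (z \in U) && e v0 z by rewrite -nbrP.
  have [c' Rz A] := reach_star v0 c0 z R0 zU ez.
  rewrite (pickE z c' Rz); apply/esym/A.
  by rewrite in_setI star_self star_nbr.
Qed.

End Monodromy.

Section Dimension2.
Variables (T : finType) (e : rel T).
Hypotheses (e_sym : symmetric e) (e_irr : irreflexive e).
Implicit Types (U W : {set T}) (x y z u v w a b : T) (P : {set 'I_4}) (c g : T -> 'I_4).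

Lemma proper_on_palette P P' U c : P \subset P' -> proper_on e P U c -> proper_on e P' U c.
Proof. by move=> /subsetP s [H1 H2]; split => // x /H1 /s. Qed.

Lemma star_coloring_link U P w y c : star_coloring e U P w c -> y \in nbr e U w ->
  star_coloring e (nbr e U w) (P :\ c w) y c.
Proof.
move=> gc yS; have /andP[yU ewy] : (y \in U) && e w y by rewrite -nbrP.
apply: (proper_on_nbr_palette gc (star_self _ _ w)).
- by apply/subsetP=> z; rewrite !inE => /orP[/eqP->|/andP[/andP[-> ->] _]];
    rewrite ?yU ?ewy orbT.
- by move=> z; rewrite !inE => /orP[/eqP->|/andP[/andP[_ ->] _]].
Qed.

(* With three colors, a proper coloring of the star of [w] is determined by
   its values at [w] and at one vertex of the (connected) link: along an edge
   [a b] of the link, [b] must take the color different from those of [w]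
   and [a]. *)
Lemma star_rigid2 U P w y c1 c2 : #|P| = 3 -> connected_in e (nbr e U w) ->
  y \in nbr e U w -> star_coloring e U P w c1 -> star_coloring e U P w c2 ->
  c1 w = c2 w -> c1 y = c2 y -> agree (star e U w) c1 c2.
Proof.
move=> cP cW yW [g11 g12] [g21 g22] Ew Ey z.
rewrite in_star => /orP[/eqP->//|zW].
have inB a : a \in nbr e U w -> a \in star e U w by move=> aW; rewrite in_star aW orbT.
have ewN a : a \in nbr e U w -> e w a by rewrite nbrP => /andP[].
apply: (connect_induced_ind (Q := fun z => c1 z = c2 z) Ey _ (cW y z yW zW)).
move=> a b aW bW eab Ea.
apply: (third_color_unique (a := c1 w) (b := c1 a) cP).
- exact/g11/star_self.
- exact/g11/inB.
- by apply: g12 => //; [apply: star_self | apply: inB | apply: ewN].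
- exact/g11/inB.
- exact/g21/inB.
- by rewrite eq_sym; apply: g12 => //; [apply: star_self | apply: inB | apply: ewN].
- by apply: g12 => //; [apply: inB | apply: inB | rewrite e_sym].
- by rewrite Ew eq_sym; apply: g22 => //; [apply: star_self | apply: inB | apply: ewN].
- by rewrite Ea; apply: g22 => //; [apply: inB | apply: inB | rewrite e_sym].
Qed.

Definition even_links U := forall w, w \in U -> Sd e 1 (nbr e U w) -> ~~ odd #|nbr e U w|.

Lemma star_extend2 U P w y (al be : 'I_4) : #|P| = 3 -> Gstep e (SB e 1) U ->
  even_links U -> w \in U -> y \in nbr e U w -> al \in P -> be \in P -> be != al ->
  exists c', [/\ star_coloring e U P w c', c' w = al & c' y = be].
Proof.
move=> cP [G _] Hev wU yW alP beP beal.
have /cards2P [a [b [ab Eab]]] : #|P :\ al| == 2.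
  by move: cP; rewrite (cardsD1 al P) alP => /eqP; rewrite /= add1n eqSS.
have beab : be \in [set a; b] by rewrite -Eab !inE beal.
have HW : Bd e 1 (nbr e U w) \/ (Sd e 1 (nbr e U w) /\ ~~ odd #|nbr e U w|).
  by case: (G w wU) => [H|H]; [right; split => //; apply: Hev | left].
have [g [Hg gy]] := two_coloring_at e_sym e_irr ab beab yW HW.
have subP : [set a; b] \subset P by rewrite -Eab subsetDl.
exists (fun z => if z == w then al else g z); split.
- apply: proper_on_setU1 => //; first exact: proper_on_palette subP Hg.
  move=> z zW _; case: Hg => H _; move: (H z zW); rewrite -Eab !inE.
  by case/andP.
- by rewrite eqxx.
- by move: yW; rewrite nbrP => /andP[_ /(edge_neq e_irr)/negbTE->].
Qed.

Section ThreeColoring.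
Variables (U : {set T}) (P : {set 'I_4}).
Hypotheses (card_P : #|P| = 3) (U_SB2 : Sd e 2 U \/ Bd e 2 U) (U_even : even_links U).

Lemma star_extend_dim2 v w : v \in U -> w \in U -> e v w -> forall c,
  star_coloring e U P v c -> exists c',
    star_coloring e U P w c' /\ agree (star e U v :&: star e U w) c c'.
Proof.
move=> vU wU evw c [gc1 gc2].
have cwP : c w \in P by apply/gc1/star_nbr.
have cvP : c v \in P by apply/gc1/star_self.
have cvw : c v != c w by apply: gc2 => //; [apply: star_self | apply: star_nbr].
have vS : v \in nbr e U w by rewrite nbrP vU e_sym.
have [c' [[gc'1 gc'2] c'w c'v]] :=
  star_extend2 card_P (SB_succ_Gstep U_SB2) U_even wU vS cwP cvP cvw.
exists c'; split; first by split.
move=> z; rewrite in_setI => /andP[zBv zBw].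
move: (zBw); rewrite !inE => /orP[/eqP->//|/andP[_ ewz]].
move: (zBv); rewrite !inE => /orP[/eqP->//|/andP[_ evz]].
apply: (third_color_unique card_P cwP cvP _ (gc1 z zBv) (gc'1 z zBw)).
- by rewrite eq_sym.
- by rewrite eq_sym; apply: gc2 => //; apply: star_nbr.
- by rewrite eq_sym; apply: gc2 => //; apply: star_self.
- by rewrite -c'w eq_sym; apply: gc'2 => //; apply: star_self.
- by rewrite -c'v eq_sym; apply: gc'2 => //; apply: star_nbr; rewrite // e_sym.
Qed.

Lemma star_rigid_edge_dim2 v w : v \in U -> w \in U -> e v w -> forall c1 c2,
  star_coloring e U P w c1 -> star_coloring e U P w c2 ->
  agree (star e U v :&: star e U w) c1 c2 -> agree (star e U w) c1 c2.
Proof.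
move=> vU wU evw c1 c2 g1 g2 A.
have vS : v \in nbr e U w by rewrite nbrP vU e_sym.
apply: (star_rigid2 card_P (SB_link_connected e_sym e_irr U_SB2 wU) vS g1 g2); apply: A.
- by rewrite in_setI star_self star_nbr.
- by rewrite in_setI star_self star_nbr // e_sym.
Qed.

Lemma star_rigid_triangle_dim2 a b w : a \in U -> b \in U -> w \in U ->
  e a b -> e b w -> e a w -> forall d1 d2,
  star_coloring e U P w d1 -> star_coloring e U P w d2 ->
  agree (star e U a :&: star e U b :&: star e U w) d1 d2 -> agree (star e U w) d1 d2.
Proof.
move=> aU bU wU eab ebw eaw d1 d2 g1 g2 A.
have aS : a \in nbr e U w by rewrite nbrP aU e_sym.
apply: (star_rigid2 card_P (SB_link_connected e_sym e_irr U_SB2 wU) aS g1 g2); apply: A.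
- by rewrite !in_setI star_self !star_nbr.
- by rewrite !in_setI star_self !star_nbr // e_sym.
Qed.

Lemma three_coloring2 v0 c0 : v0 \in U -> star_coloring e U P v0 c0 ->
  exists f, proper_on e P U f /\ agree (star e U v0) f c0.
Proof.
move=> v0U; apply: (monodromy e_sym e_irr star_extend_dim2 star_rigid_edge_dim2
  star_rigid_triangle_dim2 v0U).
- exact: (SB_connected e_sym e_irr (d := 1)).
- exact: SB2_simply_connected.
Qed.

Lemma three_colorable2 : exists f, proper_on e P U f.
Proof.
have [v0 v0U] := SB_nonempty U_SB2.
have [y yS] := SB_link_nonempty U_SB2 v0U.
have /card_gt0P [al alP] : 0 < #|P| by rewrite card_P.
have /card_gt0P [be] : 0 < #|P :\ al| by move: card_P; rewrite (cardsD1 al P) alP add1n => -[->].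
rewrite !inE => /andP[beal beP].
have [c [gc _ _]] := star_extend2 card_P (SB_succ_Gstep U_SB2) U_even v0U yS alP beP beal.
by have [f [Hf _]] := three_coloring2 v0U gc; exists f.
Qed.

End ThreeColoring.
End Dimension2.

Section Dimension3.
Variables (T : finType) (e : rel T).
Hypotheses (e_sym : symmetric e) (e_irr : irreflexive e).
Implicit Types (x y z v w a b p q : T) (c : T -> 'I_4).
Variables (U : {set T}) (P : {set 'I_4}).
Hypotheses (card_P : #|P| = 4)
  (links_SB2 : forall w, w \in U -> Sd e 2 (nbr e U w) \/ Bd e 2 (nbr e U w))
  (links_even : forall w, w \in U -> even_links e (nbr e U w)).

Lemma card_setD1_palette k : k \in P -> #|P :\ k| = 3.
Proof. by move=> kP; move: card_P; rewrite (cardsD1 k) kP add1n => -[]. Qed.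

(* Both colorings restrict to 3-colorings of the link of [w] with the same
   palette; [star_rigid2] inside the link spreads their agreement from [p, q]
   to the star of every vertex of the link. *)
Lemma star_rigid_dim3 w p q c1 c2 : w \in U -> p \in nbr e U w ->
  q \in nbr e (nbr e U w) p ->
  star_coloring e U P w c1 -> star_coloring e U P w c2 ->
  c1 w = c2 w -> c1 p = c2 p -> c1 q = c2 q -> agree (star e U w) c1 c2.
Proof.
move=> wU pS qL g1 g2 Ew Ep Eq; set S := nbr e U w in pS qL *.
have cS := SB_connected e_sym e_irr (links_SB2 wU).
have link_agree y z0 : y \in S -> c1 y = c2 y -> z0 \in nbr e S y -> c1 z0 = c2 z0 ->
    agree (star e S y) c1 c2.
  move=> yS Ey z0L Ez0.
  have g2' := star_coloring_link g2 yS; rewrite -Ew in g2'.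
  exact: (star_rigid2 e_sym (card_setD1_palette (proj1 g1 w (star_self e U w)))
    (SB_link_connected e_sym e_irr (links_SB2 wU) yS) z0L (star_coloring_link g1 yS) g2').
pose Q y := c1 y = c2 y /\ agree (star e S y) c1 c2.
have Qp : Q p by split => //; apply: link_agree Ep qL Eq.
have Q_step a b : a \in S -> b \in S -> e a b -> Q a -> Q b.
  move=> aS bS eab [Ea Ha].
  have Eb : c1 b = c2 b by apply: Ha; apply: star_nbr.
  by split => //; apply: (link_agree b a bS Eb) => //; rewrite nbrP aS e_sym.
move=> z; rewrite in_star => /orP[/eqP->//|zS].
by case: (connect_induced_ind Qp Q_step (cS p z pS zS)).
Qed.

Lemma star_extend_dim3 v w : v \in U -> w \in U -> e v w -> forall c,
  star_coloring e U P v c -> exists c',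
    star_coloring e U P w c' /\ agree (star e U v :&: star e U w) c c'.
Proof.
move=> vU wU evw c gc.
have vS : v \in nbr e U w by rewrite nbrP vU e_sym.
have gv : star_coloring e (nbr e U w) (P :\ c w) v c.
  apply: (proper_on_nbr_palette gc (star_nbr wU evw)).
  - by apply/subsetP=> z; rewrite !inE => /orP[->//|/andP[/andP[-> _] ->]]; rewrite orbT.
  - by move=> z; rewrite !inE => /orP[/eqP->|/andP[/andP[_ ->] _]] //; rewrite e_sym.
have cwP : c w \in P by apply/(proj1 gc)/star_nbr.
have [g [[g1 g2] Ag]] :=
  three_coloring2 e_sym e_irr (card_setD1_palette cwP) (links_SB2 wU) (links_even wU) vS gv.
exists (fun z => if z == w then c w else g z); split.
  apply: proper_on_setU1 => //.
    by split => // x xS; move: (g1 x xS); rewrite inE => /andP[].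
  by move=> y yS _; move: (g1 y yS); rewrite !inE eq_sym => /andP[].
move=> z; rewrite in_setI => /andP[zBv]; rewrite !inE => /orP[/eqP->|/andP[zU ewz]].
  by rewrite eqxx.
rewrite (negbTE (edge_neq e_irr ewz)) Ag // !inE.
by move: zBv; rewrite !inE => /orP[->//|/andP[_ ->]]; rewrite zU ewz orbT.
Qed.

Lemma star_rigid_edge_dim3 v w : v \in U -> w \in U -> e v w -> forall c1 c2,
  star_coloring e U P w c1 -> star_coloring e U P w c2 ->
  agree (star e U v :&: star e U w) c1 c2 -> agree (star e U w) c1 c2.
Proof.
move=> vU wU evw c1 c2 g1 g2 A.
have vS : v \in nbr e U w by rewrite nbrP vU e_sym.
have [p pL] := SB_link_nonempty (links_SB2 wU) vS.
have /andP[pS evp] : (p \in nbr e U w) && e v p by rewrite -nbrP.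
have pU : p \in U by move: pS; rewrite nbrP => /andP[].
apply: (star_rigid_dim3 wU vS pL g1 g2); apply: A; rewrite in_setI.
- by rewrite star_self star_nbr.
- by rewrite star_self star_nbr // e_sym.
- by apply/andP; split; apply: star_nbr => //; move: pS; rewrite nbrP => /andP[].
Qed.

Lemma star_rigid_triangle_dim3 a b w : a \in U -> b \in U -> w \in U ->
  e a b -> e b w -> e a w -> forall d1 d2,
  star_coloring e U P w d1 -> star_coloring e U P w d2 ->
  agree (star e U a :&: star e U b :&: star e U w) d1 d2 -> agree (star e U w) d1 d2.
Proof.
move=> aU bU wU eab ebw eaw d1 d2 g1 g2 A.
have aS : a \in nbr e U w by rewrite nbrP aU e_sym.
have bL : b \in nbr e (nbr e U w) a by rewrite !nbrP bU eab e_sym ebw.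
apply: (star_rigid_dim3 wU aS bL g1 g2); apply: A; rewrite !in_setI.
- by rewrite star_self !star_nbr.
- by rewrite star_self !star_nbr // e_sym.
- by rewrite star_self !star_nbr // e_sym.
Qed.

Lemma star_coloring_exists_dim3 v : v \in U -> exists c, star_coloring e U P v c.
Proof.
move=> vU; have /card_gt0P [k kP] : 0 < #|P| by rewrite card_P.
have [g [g1 g2]] :=
  three_colorable2 e_sym e_irr (card_setD1_palette kP) (links_SB2 vU) (links_even vU).
exists (fun z => if z == v then k else g z); apply: proper_on_setU1 => //.
  by split => // x xS; move: (g1 x xS); rewrite inE => /andP[].
by move=> y yS _; move: (g1 y yS); rewrite !inE eq_sym => /andP[].
Qed.

Theorem four_coloring3 : connected_in e U -> simply_connected_in e U ->
  exists f, proper_on e P U f.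
Proof.
move=> cU sU; case: (pickP (mem U)) => [v vU|U0].
  have [c gc] := star_coloring_exists_dim3 vU.
  have [f [Hf _]] := monodromy e_sym e_irr star_extend_dim3 star_rigid_edge_dim3
    star_rigid_triangle_dim3 vU cU sU gc.
  by exists f.
by exists (fun _ => ord0); split=> x; rewrite [x \in U]U0.
Qed.

End Dimension3.

Lemma edge_linkE (T : finType) (e : rel T) w y :
  edge_link e w y = nbr e (nbr e [set: T] w) y.
Proof. by apply/setP=> z; rewrite !inE. Qed.

Lemma even_links_of_interior_edges (T : finType) (e : rel T) :
  symmetric e -> irreflexive e ->
  (forall a b : T, e a b -> interior_edge e a b -> ~~ odd (edge_degree e a b)) ->
  forall w, w \in [set: T] -> even_links e (nbr e [set: T] w).
Proof.
move=> e_sym e_irr Hev w _ y yS S1.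
have /andP[_ ewy] : (y \in [set: T]) && e w y by rewrite -nbrP.
have := Hev w y ewy; rewrite /interior_edge /edge_degree edge_linkE; apply.
exact: S1_cycle_graph.
Qed.

Theorem mainTheorem11 (T : finType) (e : rel T)
  (e_sym : symmetric e) (e_irr : irreflexive e) :
  Gclass e 3 [set: T] ->
  simply_connected e ->
  (forall a b : T, e a b -> interior_edge e a b -> ~~ odd (edge_degree e a b)) ->
  exists f : T -> 'I_4, forall x y : T, e x y -> f x != f y.
Proof.
move=> [links_SB2 _] sc Hev.
have card4 : #|[set: 'I_4]| = 4 by rewrite cardsT card_ord.
have [f [_ Hf]] := four_coloring3 e_sym e_irr card4 links_SB2
  (even_links_of_interior_edges e_sym e_irr Hev)
  (connected_in_setT sc.1) (simply_connected_in_setT sc).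
by exists f => x y; apply: Hf; rewrite in_setT.
Qed.
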